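(* Suppose that $X\subseteq\mathbb{R}$ is a Bernstein set. Then \textsc{Bob} has a winning strategy in the game $\mathsf{BM}_\mathrm{fin}(X)$.
   Context: A set $X\subseteq\mathbb{R}$ is a Bernstein set if both $X$ and $\mathbb{R}\setminus X$ meet every uncountable closed subset of $\mathbb{R}$. $X$ carries the subspace topology. The game $\mathsf{BM}_\mathrm{fin}(X)$ is played by \textsc{Alice} and \textsc{Bob} as follows. \textsc{Alice} plays a non-empty open set $A_0$; \textsc{Bob} plays a finite collection $\mathcal{B}_0$ of non-empty open subsets of $A_0$. In inning $n+1$, for each $B \in \mathcal{B}_n$ \textsc{Alice} plays a non-empty open set $A_B \subseteq B$; let $\mathcal{A}_{n+1}=\{A_B : B\in\mathcal{B}_n\}$; then \textsc{Bob} plays a finite collection $\mathcal{B}_{n+1}$ of non-empty open subsets of $\bigcup\mathcal{A}_{n+1}$. Put $B_n=\bigcup\mathcal{B}_n$. \textsc{Bob} wins the play if $\bigcap_{n\in\omega}B_n\neq\emptyset$; otherwise \textsc{Alice} wins. *)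

From HB Require Import structures.
From mathcomp Require Import all_boot all_order all_algebra.
From mathcomp Require Import all_classical all_reals all_analysis.
Set Implicit Arguments. Unset Strict Implicit. Unset Printing Implicit Defensive.
Import Order.TTheory GRing.Theory Num.Theory.
Import numFieldNormedType.Exports.
Local Open Scope classical_set_scope.

Section Defs.
Variable R : realType.

Definition bernstein (X : set R) : Prop :=
  forall C : set R, closed C -> ~ countable C ->
    (C `&` X !=set0) /\ (C `&` ~` X !=set0).

Definition sub_open (X V : set R) : Prop :=
  exists U : set R, open U /\ V = U `&` X.

Definition ne_sub_open (X V : set R) : Prop := sub_open X V /\ V !=set0.

(* A play is given by Alice's first move A0 and a sequence a : nat -> (set R -> set R),
   where a n is Alice's move in inning n+1: she answers B in B_n with a n B.
   A strategy of Bob maps A0 and the history [a 0; ...; a (n-1)] to B_n. *)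
Definition bob_strategy := set R -> seq (set R -> set R) -> set (set R).

Definition bob_move (sigma : bob_strategy) (A0 : set R)
  (a : nat -> set R -> set R) (n : nat) : set (set R) :=
  sigma A0 (mkseq a n).

Definition Union (F : set (set R)) : set R := \bigcup_(B in F) B.

Definition alice_legal (X : set R) (sigma : bob_strategy) (A0 : set R)
  (a : nat -> set R -> set R) (n : nat) : Prop :=
  forall B, bob_move sigma A0 a n B -> ne_sub_open X (a n B) /\ a n B `<=` B.

Definition bob_legal (X : set R) (sigma : bob_strategy) (A0 : set R)
  (a : nat -> set R -> set R) (n : nat) : Prop :=
  finite_set (bob_move sigma A0 a n) /\
  forall B, bob_move sigma A0 a n B ->
    ne_sub_open X B /\
    B `<=` (match n with
            | 0 => A0
            | m.+1 => \bigcup_(C in bob_move sigma A0 a m) a m C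
            end).

Definition bob_winning (X : set R) (sigma : bob_strategy) : Prop :=
  forall (A0 : set R) (a : nat -> set R -> set R),
    ne_sub_open X A0 ->
    (forall n, (forall k, (k < n)%N -> alice_legal X sigma A0 a k) ->
               bob_legal X sigma A0 a n) /\
    ((forall n, alice_legal X sigma A0 a n) ->
       \bigcap_(n : nat) Union (bob_move sigma A0 a n) !=set0).

Definition bob_has_winning_strategy (X : set R) : Prop :=
  exists sigma : bob_strategy, bob_winning X sigma.

End Defs.

From mathcomp Require Import all_boot all_order all_algebra.
From mathcomp Require Import all_classical all_reals all_analysis.
From mathcomp Require Import lra.
Set Implicit Arguments. Unset Strict Implicit. Unset Printing Implicit Defensive.
Import Order.TTheory GRing.Theory Num.Theory.
Import numFieldNormedType.Exports.
Local Open Scope classical_set_scope.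
Local Open Scope ring_scope.

(* Bob answers each open set of Alice by two disjoint closed intervals inside
   it and plays their interiors intersected with X (nonempty,
   since a Bernstein set meets every nondegenerate interval).  The closed
   intervals form a Cantor scheme, so the set K of points lying in one of them
   at every level is closed, and it is uncountable: a countable set can be
   avoided along a single branch, whose nested intervals still share a point.
   Since X is Bernstein, K meets X, and a point of K and X at level n+1 lies in
   the open interval of its parent at level n, hence in Bob's n-th move. *)

Section Segments.
Variable R : realType.

Definition seg (c : R * R) : set R := `[c.1, c.2].

Lemma seg_uncountable (c : R * R) : c.1 < c.2 -> ~ countable (seg c).
Proof.
move=> c12 /countable_lebesgue_measure0.
rewrite lebesgue_measure_itv /= lte_fin c12 => /eqP.
by rewrite -EFinD eqe subr_eq0 gt_eqF.
Qed.

Lemma nested_seg_meet (b : nat -> R * R) :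
  (forall n, (b n).1 <= (b n).2) -> (forall n, seg (b n.+1) `<=` seg (b n)) ->
  exists w, forall n, seg (b n) w.
Proof.
move=> b12 bsub.
have seg_ends n : seg (b n) (b n).1 /\ seg (b n) (b n).2.
  by split; rewrite /seg /= in_itv /= lexx b12 ?andbT.
have left_incr : {homo (fun n => (b n).1) : m n / (m <= n)%N >-> m <= n}.
  apply: homo_leq => [//|y x z|n]; first exact: le_trans.
  by have := bsub n _ (seg_ends n.+1).1; rewrite /seg /= in_itv /= => /andP[].
have right_decr : {homo (fun n => (b n).2) : m n / (m <= n)%N >-> n <= m}.
  apply: (@homo_leq _ _ (fun x y => y <= x)) => [//|y x z xy yz|n].
    exact: le_trans yz xy.
  by have := bsub n _ (seg_ends n.+1).2; rewrite /seg /= in_itv /= => /andP[].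
have left_le_right m n : (b m).1 <= (b n).2.
  apply: le_trans (left_incr _ _ (leq_maxl m n)) _.
  exact: le_trans (b12 _) (right_decr _ _ (leq_maxr m n)).
pose E := [set (b n).1 | n in [set: nat]].
have E0 : E !=set0 by exists (b 0).1, 0.
have supE : has_sup E by split => //; exists (b 0).2 => _ [n _ <-].
exists (sup E) => n; rewrite /seg /= in_itv /=; apply/andP; split.
  by apply: sup_upper_bound => //; exists n.
by apply: ge_sup => // _ [m _ <-].
Qed.

Definition splits (s : seq (R * R)) :=
  exists c1 c2, [/\ c1 \in s, c2 \in s & seg c1 `&` seg c2 = set0].

Lemma splits_avoid (s : seq (R * R)) (P : set R) :
  splits s -> is_subset1 P -> exists2 c, c \in s & seg c `&` P = set0.
Proof.
move=> [c1 [c2 [c1s c2s c12]]] P1.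
have [c1P|/set0P[x [c1x Px]]] := eqVneq (seg c1 `&` P) set0; first by exists c1.
exists c2 => //; apply/disjoints_subset => y c2y Py.
rewrite (P1 _ _ Py Px) in c2y.
by suff : (seg c1 `&` seg c2) x by rewrite c12.
Qed.

Definition twins (x r : R) : seq (R * R) :=
  [:: (x - r / 2, x - r / 4); (x + r / 4, x + r / 2)].

Lemma twins_lt x r c : 0 < r -> c \in twins x r -> c.1 < c.2.
Proof. by move=> r0; rewrite !inE => /orP[]/eqP-> /=; lra. Qed.

Lemma twins_sub x r c : 0 < r -> c \in twins x r -> seg c `<=` `]x - r, x + r[.
Proof.
move=> r0 ct z; rewrite /seg /= !in_itv /= => /andP[z1 z2].
move: ct; rewrite !inE => /orP[]/eqP c_eq; rewrite c_eq /= in z1 z2.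
  by apply/andP; split; lra.
by apply/andP; split; lra.
Qed.

Lemma splits_twins x r : 0 < r -> splits (twins x r).
Proof.
move=> r0; exists (x - r / 2, x - r / 4), (x + r / 4, x + r / 2).
rewrite !inE !eqxx orbT; split => //; apply/disjoints_subset => z.
by rewrite /seg /= !in_itv /= => /andP[_ z2] /andP[z3 _]; lra.
Qed.

End Segments.

Section CantorScheme.
Variable R : realType.
Variables (roots : seq (R * R)) (children : nat -> R * R -> seq (R * R)).

Fixpoint level n : seq (R * R) :=
  if n is m.+1 then flatten [seq children m c | c <- level m] else roots.

Lemma levelSP n c :
  reflect (exists2 c0, c0 \in level n & c \in children n c0) (c \in level n.+1).
Proof. exact: flatten_mapP. Qed.

Definition limit_set : set R :=
  \bigcap_(n in [set: nat]) \bigcup_(c in [set` level n]) seg c.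

Lemma closed_limit_set : closed limit_set.
Proof.
apply: closed_bigI => n _; rewrite bigcup_seq.
by apply: closed_bigsetU => c _; exact: itv_closed.
Qed.

Hypothesis splits_roots : splits roots.
Hypothesis splits_children : forall n c, c \in level n -> splits (children n c).
Hypothesis children_sub :
  forall n c c', c \in level n -> c' \in children n c -> seg c' `<=` seg c.
Hypothesis level_le : forall n c, c \in level n -> c.1 <= c.2.

Lemma branch_avoiding (P : nat -> set R) : (forall n, is_subset1 (P n)) ->
  exists b : nat -> R * R, forall n,
    [/\ b n \in level n, b n.+1 \in children n (b n) & seg (b n) `&` P n = set0].
Proof.
move=> P1.
have [b0 b0_root b0P] := splits_avoid splits_roots (P1 0).
have step (nc : nat * (R * R)) : exists c', nc.2 \in level nc.1 ->
    c' \in children nc.1 nc.2 /\ seg c' `&` P nc.1.+1 = set0.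
  have [nc_in|] := pselect (nc.2 \in level nc.1); last by exists nc.2.
  have [c' ? ?] := splits_avoid (splits_children nc_in) (P1 nc.1.+1).
  by exists c'.
have [next nextP] := choice step.
pose fix b n := if n is m.+1 then next (m, b m) else b0.
have b_level n : b n \in level n /\ seg (b n) `&` P n = set0.
  elim: n => [//|n [bn _]]; have [bSn bSnP] := nextP (n, b n) bn.
  by split => //; apply/levelSP; exists (b n).
exists b => n; have [bn bnP] := b_level n.
by split => //; exact: (nextP (n, b n) bn).1.
Qed.

Lemma limit_set_uncountable : ~ countable limit_set.
Proof.
move=> /countable_injP[f f_inj].
pose P n := [set z | limit_set z /\ f z = n].
have P1 n : is_subset1 (P n).
  by move=> x y [Kx fx] [Ky fy]; apply: f_inj; rewrite ?inE // fx fy.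
have [b bP] := branch_avoiding P1.
have [w w_in] : exists w, forall n, seg (b n) w.
  apply: nested_seg_meet => n; have [bn bSn _] := bP n.
    exact: level_le bn.
  exact: children_sub bn bSn.
have Kw : limit_set w by move=> n _; exists (b n) => //; have [] := bP n.
have [_ _ avoid_w] := bP (f w).
by suff : (seg (b (f w)) `&` P (f w)) w by rewrite avoid_w.
Qed.

End CantorScheme.

Lemma level_ext (R : realType) (roots : seq (R * R))
    (children children' : nat -> R * R -> seq (R * R)) n :
  (forall k, (k < n)%N -> children k = children' k) ->
  level roots children n = level roots children' n.
Proof.
elim: n => [//|n IHn] eq_children /=.
by rewrite IHn ?eq_children // => k /ltnW; exact: eq_children.
Qed.

Section BernsteinGame.
Variables (R : realType) (X : set R).

Definition trace (c : R * R) : set R := `]c.1, c.2[ `&` X.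

Definition fits (J A : set R) (xr : R * R) : Prop :=
  [/\ 0 < xr.2, `]xr.1 - xr.2, xr.1 + xr.2[ `<=` J &
      `]xr.1 - xr.2, xr.1 + xr.2[ `&` X `<=` A].

Lemma fits_exists J A : open J -> ne_sub_open X A -> A `<=` J ->
  exists xr, fits J A xr.
Proof.
move=> oJ [[U [oU ->]] [x [Ux Xx]]] AJ.
have : nbhs x (U `&` J).
  by apply: open_nbhs_nbhs; split; [exact: openI | split; last exact: AJ].
move=> /nbhs_ballP[r /= r0 ballUJ].
exists (x, r); split => //=; rewrite -ball_itv.
  by move=> z /ballUJ[].
by move=> z [/ballUJ[Uz _] Xz].
Qed.

Definition reply (J A : set R) : seq (R * R) :=
  if pselect (exists xr, fits J A xr) is left fitsJA then
    let xr := projT1 (cid fitsJA) in twins xr.1 xr.2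
  else [::].

Lemma reply_spec J A c :
  c \in reply J A -> exists2 xr, fits J A xr & c \in twins xr.1 xr.2.
Proof.
rewrite /reply; case: pselect => // fitsJA.
by case: (cid fitsJA) => xr ? ?; exists xr.
Qed.

Lemma splits_reply J A : (exists xr, fits J A xr) -> splits (reply J A).
Proof.
rewrite /reply; case: pselect => [fitsJA _ | //].
by case: (cid fitsJA) => xr /= [r0 _ _]; exact: splits_twins.
Qed.

Lemma reply_inside J A c : c \in reply J A ->
  [/\ c.1 < c.2, seg c `<=` J & `]c.1, c.2[ `&` X `<=` A].
Proof.
move=> /reply_spec[[x r] [/= r0 ballJ ballA] ct].
have c_ball := twins_sub r0 ct.
split; first exact: twins_lt ct.
  by move=> z /c_ball/ballJ.
move=> z [zc Xz]; apply: ballA; split => //; apply: c_ball.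
exact: subset_itv_oo_cc.
Qed.

Definition nodes (A0 : set R) (a : nat -> set R -> set R) : nat -> seq (R * R) :=
  level (reply setT A0) (fun n c => reply `]c.1, c.2[ (a n (trace c))).

Lemma nodes_lt A0 a n c : c \in nodes A0 a n -> c.1 < c.2.
Proof.
case: n => [|n]; first by case/reply_inside.
by case/levelSP => c0 _ /reply_inside[].
Qed.

(* Only the entries of Alice's history [s] below [size s] are read, so the
   default [id] of [nth] never matters. *)
Definition strategy : bob_strategy R :=
  fun A0 s => trace @` [set` nodes A0 (nth id s) (size s)].

Lemma bob_moveE A0 a n : bob_move strategy A0 a n = trace @` [set` nodes A0 a n].
Proof.
rewrite /bob_move /strategy size_mkseq /nodes.
rewrite (@level_ext _ _ _
  (fun k c => reply `]c.1, c.2[ (a k (trace c)))) // => k kn.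
by rewrite nth_mkseq.
Qed.

Hypothesis bernsteinX : bernstein X.

Lemma trace_neq0 (c : R * R) : c.1 < c.2 -> trace c !=set0.
Proof.
move=> c12; pose d := (c.1 + (c.2 - c.1) / 3, c.2 - (c.2 - c.1) / 3).
have d12 : d.1 < d.2 by rewrite /=; lra.
have [[z [dz Xz]] _] :=
  bernsteinX (@itv_closed _ _ d.1 d.2) (seg_uncountable d12).
exists z; split => //; move: dz; rewrite /= !in_itv /= => /andP[z1 z2].
by apply/andP; split; lra.
Qed.

Lemma strategy_legal A0 a n : bob_legal X strategy A0 a n.
Proof.
split; first by rewrite bob_moveE; apply: finite_image; exact: finite_seq.
move=> B; rewrite bob_moveE => -[c cn <-]; split.
  split; last exact/trace_neq0/(nodes_lt cn).
  by exists `]c.1, c.2[%classic; split => //; exact: itv_open.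
case: n cn => [/reply_inside[] //|n /levelSP[c0 c0n /reply_inside[_ _ c_sub]]].
move=> z zc; rewrite bob_moveE; exists (trace c0); first by exists c0.
exact: c_sub.
Qed.

Lemma strategy_wins A0 a : ne_sub_open X A0 ->
  (forall n, alice_legal X strategy A0 a n) ->
  \bigcap_(n : nat) Union (bob_move strategy A0 a n) !=set0.
Proof.
move=> A0_open alice_legal_play.
have fits_root : exists xr, fits setT A0 xr.
  by apply: fits_exists => //; exact: openT.
have fits_node n c : c \in nodes A0 a n ->
    exists xr, fits `]c.1, c.2[ (a n (trace c)) xr.
  move=> cn; have [A_open A_sub] :
      ne_sub_open X (a n (trace c)) /\ a n (trace c) `<=` trace c.
    by apply: alice_legal_play; rewrite bob_moveE; exists c.
  by apply: fits_exists A_open _ => [|z /A_sub[]]; first exact: itv_open.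
pose K := limit_set (reply setT A0)
  (fun n c => reply `]c.1, c.2[ (a n (trace c))).
have K_uncountable : ~ countable K.
  apply: limit_set_uncountable.
  - exact: splits_reply.
  - by move=> n c /fits_node/splits_reply.
  - by move=> n c c' _ /reply_inside[_ c'_sub _] z /c'_sub/subset_itv_oo_cc.
  - by move=> n c /nodes_lt/ltW.
have [[z [Kz Xz]] _] := bernsteinX (@closed_limit_set _ _ _) K_uncountable.
exists z => n _.
have [c /levelSP[c0 c0n /reply_inside[_ c_sub _]] zc] := Kz n.+1 Logic.I.
exists (trace c0); first by rewrite bob_moveE; exists c0.
by split => //; exact: c_sub.
Qed.

End BernsteinGame.

Theorem proposition2p5 (R : realType) (X : set R) :
  bernstein X -> bob_has_winning_strategy X.
Proof.
move=> bX; exists (strategy X) => A0 a A0_open; split => [n _|].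
  exact: strategy_legal.
exact: strategy_wins.
Qed.
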